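(* Let $R$ be a Bézout domain and let $A,B,C\in R^{n\times n}$ satisfy $ABA=ACA$. If $AB$ and $CA$ are group invertible, then $AB$ is similar to $CA$.
   Context: A Bézout domain is an integral domain in which every finitely generated ideal is principal. $R^{n\times n}$ is the ring of $n\times n$ matrices over $R$. A matrix $M\in R^{n\times n}$ is group invertible if there exists $X\in R^{n\times n}$ with $MX=XM$, $XMX=X$, $MXM=M$; such $X$ is unique and denoted $M^{\#}$. Two matrices $M,N\in R^{n\times n}$ are similar if $M=S^{-1}NS$ for some invertible $S\in R^{n\times n}$. *)

From HB Require Import structures.
From mathcomp Require Import all_boot all_order all_algebra.
Set Implicit Arguments. Unset Strict Implicit. Unset Printing Implicit Defensive.
Import GRing.Theory.
Local Open Scope ring_scope.

Definition in_ideal_gen (R : comNzRingType) (s : seq R) (x : R) : Prop :=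
  exists c : seq R, size c = size s /\ x = \sum_(i < size s) c`_i * s`_i.

Definition bezout_domain (R : idomainType) : Prop :=
  forall s : seq R, exists d : R,
    forall x : R, in_ideal_gen s x <-> exists r : R, x = r * d.

Definition group_invertible (R : comNzRingType) (n : nat) (M : 'M[R]_n) : Prop :=
  exists X : 'M[R]_n, [/\ M *m X = X *m M, X *m M *m X = X & M *m X *m M = M].

Definition similar_mx (R : comUnitRingType) (n : nat) (M N : 'M[R]_n) : Prop :=
  exists S : 'M[R]_n, S \in unitmx /\ M = invmx S *m N *m S.

From HB Require Import structures.
From mathcomp Require Import all_boot all_order all_algebra.
From mathcomp Require Import zify.
Set Implicit Arguments. Unset Strict Implicit. Unset Printing Implicit Defensive.
Import GRing.Theory.
Local Open Scope ring_scope.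

(* With X, Y the group inverses of P = AB and Q = CA, the matrices E = PX and
   F = QY are idempotent.  Over a Bezout domain every idempotent matrix splits
   as E = L T with T L = 1: a nonzero idempotent fixes a unimodular column (one
   of its columns divided by the gcd of its entries), which can be split off,
   one rank at a time.  P compresses to an invertible core P1 = T P L on the
   image of E and vanishes on the image of 1 - E; likewise for Q.  The maps
   M = T_F (CAB) L_E and M' = T_E A L_F satisfy M' M = P1^2 and M M' = Q1^2,
   so M is invertible and conjugates P1 to Q1.  Hence the images of E and F
   have the same rank, so do those of 1 - E and 1 - F, and gluing M with any
   isomorphism between the latter conjugates P to Q. *)

Definition group_inverse (R : pzRingType) n (P X : 'M[R]_n) : Prop :=
  [/\ P *m X = X *m P, X *m P *m X = X & P *m X *m P = P].

Definition splitting (R : pzRingType) n r (L : 'M[R]_(n, r)) (T : 'M[R]_(r, n))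
    (E : 'M[R]_n) : Prop :=
  L *m T = E /\ T *m L = 1%:M.

Definition idempotent_splits (R : pzRingType) n (E : 'M[R]_n) : Prop :=
  exists r (L : 'M[R]_(n, r)) (T : 'M[R]_(r, n)), splitting L T E.

Lemma in_ideal_gen_nth (R : comNzRingType) (s : seq R) k :
  (k < size s)%N -> in_ideal_gen s s`_k.
Proof.
move=> ks; exists (mkseq (fun j => (j == k)%:R) (size s)); split; first exact: size_mkseq.
rewrite (bigD1 (Ordinal ks)) //= nth_mkseq // eqxx mul1r big1 ?addr0 // => i neq_ik.
by rewrite nth_mkseq // -[k]/(nat_of_ord (Ordinal ks)) val_eqE (negbTE neq_ik) mul0r.
Qed.

Section BezoutSplitting.
Variable R : idomainType.
Hypothesis bezoutR : bezout_domain R.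

Lemma bezout_col_unimodular n (x : 'cV[R]_n) : x != 0 ->
  exists d (y : 'cV[R]_n) (w : 'rV[R]_n), [/\ d != 0, x = d *: y & w *m y = 1%:M].
Proof.
move=> x0; pose s := [seq x i 0 | i <- enum 'I_n].
have size_s : size s = n by rewrite size_map size_enum_ord.
have nth_s (i : 'I_n) : s`_i = x i 0.
  by rewrite (nth_map i) ?size_enum_ord // nth_ord_enum.
have [d gen_d] := bezoutR s.
have /fin_all_exists[f xE] : forall i, exists r, x i 0 = r * d.
  by move=> i; apply/gen_d; rewrite -nth_s; apply: in_ideal_gen_nth; rewrite size_s.
have [c [_ dE]] : in_ideal_gen s d by apply/gen_d; exists 1; rewrite mul1r.
pose y := \col_i f i; pose w := \row_(i < n) c`_i.
have xy : x = d *: y by apply/matrixP => i j; rewrite ord1 !mxE mulrC xE.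
have d0 : d != 0 by apply: contraNneq x0 => d0; rewrite xy d0 scale0r.
exists d, y, w; split => //; apply/eqP.
suff: d *: (w *m y - 1%:M) == 0 by rewrite scalemx_eq0 (negbTE d0) subr_eq0.
rewrite scalerBr scalemxAr -xy subr_eq0; apply/eqP/matrixP => i j.
rewrite !ord1 !mxE mulr1 dE size_s; apply: eq_bigr => k _.
by rewrite !mxE nth_s.
Qed.

Lemma idempotent_fixed_unimodular n (E : 'M[R]_n) : E *m E = E -> E != 0 ->
  exists (y : 'cV[R]_n) (w : 'rV[R]_n), [/\ E *m y = y, w *m E = w & w *m y = 1%:M].
Proof.
move=> EE E0.
have [j Ej0] : exists j, col j E != 0.
  apply/existsP; apply: contraR E0 => /existsPn Ecol0.
  apply/eqP/matrixP => i j; move/negbNE/eqP/matrixP/(_ i 0): (Ecol0 j).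
  by rewrite !mxE.
have [d [y [w [d0 Ej wy]]]] := bezout_col_unimodular Ej0.
have Ey : E *m y = y.
  apply/eqP; rewrite -subr_eq0.
  suff: d *: (E *m y - y) == 0 by rewrite scalemx_eq0 (negbTE d0).
  by rewrite scalerBr scalemxAr -Ej colE mulmxA EE subrr.
by exists y, (w *m E); rewrite -!mulmxA EE Ey.
Qed.

(* L *m T + E is idempotent; the induction moves one rank at a time from E to
   the split part. *)
Definition partial_splitting n r (L : 'M[R]_(n, r)) (T : 'M[R]_(r, n)) (E : 'M[R]_n) :=
  [/\ E *m E = E, T *m L = 1%:M, T *m E = 0 & E *m L = 0].

Lemma partial_splitting_step n r (L : 'M[R]_(n, r)) T E :
  partial_splitting L T E -> E != 0 ->
  exists (L' : 'M[R]_(n, r + 1)) (T' : 'M[R]_(r + 1, n)) E',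
    partial_splitting L' T' E' /\ L' *m T' + E' = L *m T + E.
Proof.
move=> [EE TL TE EL] E0.
have [y [w [Ey wE wy]]] := idempotent_fixed_unimodular EE E0.
have Ty : T *m y = 0 by rewrite -Ey mulmxA TE mul0mx.
have wL : w *m L = 0 by rewrite -wE -mulmxA EL mulmx0.
exists (row_mx L y), (col_mx T w), (E - y *m w); split; last first.
  by rewrite mul_row_col [E - _]addrC addrA addrK.
split.
- by rewrite mulmxBl !mulmxBr EE !mulmxA Ey -(mulmxA y w) wE -(mulmxA y w y) wy
    mulmx1 subrr subr0.
- by rewrite mul_col_row TL Ty wL wy -scalar_mx_block.
- by rewrite mul_col_mx !mulmxBr !mulmxA TE Ty wE wy mul0mx mul1mx !subrr col_mx0.
- by rewrite mul_mx_row !mulmxBl -!mulmxA EL wL Ey wy mulmx0 mulmx1 !subrr row_mx0.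
Qed.

Lemma partial_splitting_splits n r (L : 'M[R]_(n, r)) T E :
  partial_splitting L T E -> idempotent_splits (L *m T + E).
Proof.
have [k] := ubnP (n - r); elim: k r L T E => [|k IH] r L T E // ltk split_E.
have [->|E0] := eqVneq E 0.
  by case: split_E => _ TL _ _; exists r, L, T; rewrite addr0.
have [L' [T' [E' [split_E' <-]]]] := partial_splitting_step split_E E0.
have [_ /mulmx1_min le_r1_n _ _] := split_E'.
by apply: IH split_E'; move: ltk le_r1_n; lia.
Qed.

Lemma idempotent_split n (E : 'M[R]_n) : E *m E = E -> idempotent_splits E.
Proof.
move=> EE; rewrite -[E]add0r -[0](mul0mx _ (0 : 'M[R]_(0, n))).
apply: partial_splitting_splits; split; rewrite ?mulmx0 ?mul0mx //.
by apply/matrixP => [[]].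
Qed.
End BezoutSplitting.

Lemma idempotent_compl (R : pzRingType) n (E : 'M[R]_n) :
  E *m E = E -> (1%:M - E) *m (1%:M - E) = 1%:M - E.
Proof. by move=> EE; rewrite mulmxBl !mulmxBr !mul1mx mulmx1 EE subrr subr0. Qed.

Section ComplementarySplittings.
Variables (R : comNzRingType) (n r r' : nat) (E : 'M[R]_n).
Variables (L : 'M[R]_(n, r)) (T : 'M[R]_(r, n)) (L' : 'M[R]_(n, r')) (T' : 'M[R]_(r', n)).
Hypotheses (EE : E *m E = E) (sE : splitting L T E) (sE' : splitting L' T' (1%:M - E)).

Lemma split_compl_orth : T *m L' = 0 /\ T' *m L = 0.
Proof.
have [[LT TL] [LT' TL']] := (sE, sE').
have ET : E *m (1%:M - E) = 0 by rewrite mulmxBr mulmx1 EE subrr.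
have TE : (1%:M - E) *m E = 0 by rewrite mulmxBl mul1mx EE subrr.
split.
  rewrite -[T]mul1mx -TL -[L']mulmx1 -TL' !mulmxA -(mulmxA T L T) LT.
  by rewrite -(mulmxA _ L' T') LT' -(mulmxA T E) ET mulmx0 mul0mx.
rewrite -[T']mul1mx -TL' -[L]mulmx1 -TL !mulmxA -(mulmxA T' L' T') LT'.
by rewrite -(mulmxA _ L T) LT -(mulmxA T') TE mulmx0 mul0mx.
Qed.

Lemma split_compl_dim : (r + r')%N = n.
Proof.
have [[LT TL] [LT' TL']] := (sE, sE'); have [TL'0 T'L0] := split_compl_orth.
apply/eqP; rewrite eqn_leq; apply/andP; split.
  apply: (@mulmx1_min _ _ _ (col_mx T T') (row_mx L L')).
  by rewrite mul_col_row TL TL' TL'0 T'L0 -scalar_mx_block.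
apply: (@mulmx1_min _ _ _ (row_mx L L') (col_mx T T')).
by rewrite mul_row_col LT LT' addrC subrK.
Qed.
End ComplementarySplittings.

Section GroupInverseCore.
Variables (R : pzRingType) (n : nat) (P X : 'M[R]_n).
Hypothesis gPX : group_inverse P X.

Lemma grinv_idem : P *m X *m (P *m X) = P *m X.
Proof. by case: gPX => _ _ PXP; rewrite mulmxA PXP. Qed.

Variables (r r' : nat) (L : 'M[R]_(n, r)) (T : 'M[R]_(r, n)).
Variables (L' : 'M[R]_(n, r')) (T' : 'M[R]_(r', n)).
Hypotheses (sE : splitting L T (P *m X)) (sE' : splitting L' T' (1%:M - P *m X)).

Lemma core_mulTP : T *m P = T *m P *m L *m T.
Proof.
have [[PX_XP _ PXP] [LT _]] := (gPX, sE).
by rewrite -mulmxA LT -mulmxA PX_XP (mulmxA P) PXP.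
Qed.

Lemma core_mulPL : P *m L = L *m (T *m P *m L).
Proof. by have [[_ _ PXP] [LT _]] := (gPX, sE); rewrite !mulmxA LT PXP. Qed.

Lemma core_unit : T *m X *m L *m (T *m P *m L) = 1%:M.
Proof.
have [[PX_XP XPX _] [LT TL]] := (gPX, sE).
rewrite !mulmxA -(mulmxA _ L T) LT !mulmxA -(mulmxA (T *m X) P X) -(mulmxA T X).
by rewrite (mulmxA X P X) XPX -(mulmxA T X P) -PX_XP -LT mulmxA TL mul1mx TL.
Qed.

Lemma compl_mulTP : T' *m P = 0.
Proof.
have [[_ _ PXP] [LT' TL']] := (gPX, sE').
rewrite -[T']mul1mx -TL' -(mulmxA T' L') LT' -mulmxA mulmxBl mul1mx PXP.
by rewrite subrr mulmx0.
Qed.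

Lemma compl_mulPL : P *m L' = 0.
Proof.
have [[PX_XP _ PXP] [LT' TL']] := (gPX, sE').
rewrite -[L']mulmx1 -TL' (mulmxA L') LT' mulmxA mulmxBr mulmx1 PX_XP mulmxA PXP.
by rewrite subrr mul0mx.
Qed.
End GroupInverseCore.

Section Similarity.
Variable R : comUnitRingType.

Lemma similar_of_intertwining_unit n (P Q S S' : 'M[R]_n) :
  S' *m S = 1%:M -> S *m P = Q *m S -> similar_mx P Q.
Proof.
move=> S'S SP; have [_ Su] := mulmx1_unit S'S.
by exists S; split; rewrite // -mulmxA -SP mulmxA mulVmx // mul1mx.
Qed.

Lemma similar_of_split_cores n r r' s s' (P Q : 'M[R]_n)
    (L1 : 'M_(n, r)) (T1 : 'M_(r, n)) (L1' : 'M_(n, r')) (T1' : 'M_(r', n))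
    (L2 : 'M_(n, s)) (T2 : 'M_(s, n)) (L2' : 'M_(n, s')) (T2' : 'M_(s', n))
    (P1 : 'M_r) (Q1 : 'M_s) (M : 'M_(s, r)) (M' : 'M_(r, s)) :
  L1 *m T1 + L1' *m T1' = 1%:M -> T1 *m P = P1 *m T1 -> T1' *m P = 0 ->
  T2 *m L2 = 1%:M -> T2' *m L2' = 1%:M -> T2 *m L2' = 0 -> T2' *m L2 = 0 ->
  Q *m L2 = L2 *m Q1 -> Q *m L2' = 0 ->
  M' *m M = 1%:M -> M *m P1 = Q1 *m M -> (r' <= s')%N -> similar_mx P Q.
Proof.
move=> sum1 T1P T1'P TL2 TL2' T2L2' T2'L2 QL2 QL2' M'M MP1 le_r's'.
(* r' = s' in the application, but not convertibly. *)
pose N : 'M[R]_(s', r') := pid_mx r'; pose N' : 'M[R]_(r', s') := pid_mx r'.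
have N'N : N' *m N = 1%:M by rewrite mul_pid_mx minnn (minn_idPr le_r's') pid_mx_1.
apply: (@similar_of_intertwining_unit _ _ _
  (L2 *m M *m T1 + L2' *m N *m T1') (L1 *m M' *m T2 + L1' *m N' *m T2')).
  rewrite !mulmxDl !mulmxDr !mulmxA.
  rewrite -(mulmxA _ T2 L2) TL2 mulmx1 -(mulmxA _ M' M) M'M mulmx1.
  rewrite -(mulmxA _ T2 L2') T2L2' mulmx0 !mul0mx addr0.
  rewrite -(mulmxA _ T2' L2) T2'L2 mulmx0 !mul0mx add0r.
  by rewrite -(mulmxA _ T2' L2') TL2' mulmx1 -(mulmxA _ N' N) N'N mulmx1.
rewrite mulmxDl mulmxDr -!mulmxA T1P T1'P !mulmx0 addr0.
by rewrite !mulmxA QL2' QL2 !mul0mx addr0 -(mulmxA L2 M) MP1 !mulmxA.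
Qed.
End Similarity.

Lemma similar_of_group_inverses_intertwined (R : idomainType) n (P X Q Y A K : 'M[R]_n) :
  bezout_domain R -> group_inverse P X -> group_inverse Q Y ->
  A *m K = P *m P -> K *m A = Q *m Q -> Q *m K = K *m P ->
  Q *m Y *m K = K -> K *m (P *m X) = K -> similar_mx P Q.
Proof.
move=> bezoutR gPX gQY AK KA QK QYK KPX.
have EE := grinv_idem gPX; have FF := grinv_idem gQY.
have [r [L1 [T1 sE]]] := idempotent_split bezoutR EE.
have [r' [L1' [T1' sE']]] := idempotent_split bezoutR (idempotent_compl EE).
have [s [L2 [T2 sF]]] := idempotent_split bezoutR FF.
have [s' [L2' [T2' sF']]] := idempotent_split bezoutR (idempotent_compl FF).
have [[LT1 _] [LT1' _]] := (sE, sE'); have [[LT2 TL2] [_ TL2']] := (sF, sF').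
pose P1 := T1 *m P *m L1; pose Q1 := T2 *m Q *m L2.
pose M := T2 *m K *m L1; pose M' := T1 *m A *m L2.
have PL1 : P *m L1 = L1 *m P1 := core_mulPL gPX sE.
have QL2 : Q *m L2 = L2 *m Q1 := core_mulPL gQY sF.
have T2Q : T2 *m Q = Q1 *m T2 := core_mulTP gQY sF.
have M'M : M' *m M = P1 *m P1.
  rewrite /M' /M !mulmxA -(mulmxA _ L2 T2) LT2 -(mulmxA _ (Q *m Y) K) QYK.
  by rewrite -(mulmxA T1 A K) AK mulmxA -(mulmxA _ P L1) PL1 !mulmxA.
have MM' : M *m M' = Q1 *m Q1.
  rewrite /M' /M !mulmxA -(mulmxA _ L1 T1) LT1 -(mulmxA _ K (P *m X)) KPX.
  by rewrite -(mulmxA T2 K A) KA mulmxA -(mulmxA _ Q L2) QL2 !mulmxA.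
have MP1 : M *m P1 = Q1 *m M.
  rewrite /M -(mulmxA _ L1 P1) -PL1 (mulmxA (T2 *m K)) -(mulmxA T2 K P) -QK.
  by rewrite !mulmxA T2Q.
pose X1 := T1 *m X *m L1; pose Y1 := T2 *m Y *m L2.
have X1P1 : X1 *m P1 = 1%:M := core_unit gPX sE.
have Q1Y1 : Q1 *m Y1 = 1%:M := mulmx1C (core_unit gQY sF).
have le_s_r : (s <= r)%N.
  apply: (@mulmx1_min _ _ _ M (M' *m Y1 *m Y1)).
  by rewrite (mulmxA M) (mulmxA M) MM' -(mulmxA Q1 Q1) Q1Y1 mulmx1 Q1Y1.
have dimP := split_compl_dim EE sE sE'; have dimQ := split_compl_dim FF sF sF'.
have [T2L2' T2'L2] := split_compl_orth FF sF sF'.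
have sum1 : L1 *m T1 + L1' *m T1' = 1%:M by rewrite LT1 LT1' addrC subrK.
have M'M1 : X1 *m X1 *m M' *m M = 1%:M.
  by rewrite -(mulmxA _ M' M) M'M mulmxA -(mulmxA X1 X1) X1P1 mulmx1 X1P1.
apply: (similar_of_split_cores sum1 (core_mulTP gPX sE) (compl_mulTP gPX sE')
  TL2 TL2' T2L2' T2'L2 QL2 (compl_mulPL gQY sF') M'M1 MP1).
by move: dimP dimQ le_s_r; lia.
Qed.

Theorem theorem2p1 (R : idomainType) (n : nat) (A B C : 'M[R]_n) :
  bezout_domain R ->
  A *m B *m A = A *m C *m A ->
  group_invertible (A *m B) -> group_invertible (C *m A) ->
  similar_mx (A *m B) (C *m A).
Proof.
move=> bezoutR ABA [X gX] [Y gY].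
have xABA m (D : 'M[R]_(m, n)) : D *m A *m B *m A = D *m A *m C *m A.
  by rewrite -!mulmxA (mulmxA A B A) ABA !mulmxA.
apply: (similar_of_group_inverses_intertwined (A := A) (K := C *m (A *m B))
  bezoutR gX gY).
- by rewrite !mulmxA -ABA.
- by rewrite !mulmxA xABA.
- by rewrite !mulmxA -xABA.
- by case: gY => _ _ QYQ; rewrite (mulmxA C A B) mulmxA QYQ.
- case: gX => PX_XP _ PXP.
  by rewrite -mulmxA PX_XP (mulmxA (A *m B) X) PXP.
Qed.
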